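(* Let $R>0$, $d\ge1$, $\Lambda^d_R=\{x\in\mathbb{R}^d:\|x\|_2\le R\}$, and let $X=\{x^{(1)},\dots,x^{(n)}\}\subset\Lambda^d_R$. Let $w\in\mathbb{R}^n$ with $\left(\sum_{i=1}^n|w_i|\right)^2\le\xi$, and let $\alpha>0$. Then for every positive integer $s$, \[ w^T\left(K_X-K^{\mathsf{HD}}_{X,s}\right)w\le\left(\sum_{i=1}^n|w_i|\right)^2\exp(2R^2)\left(\frac{2eR^2}{s}\right)^s, \] and moreover this quantity is at most $\alpha$ when $s=\Theta\!\left(\frac{\log\frac{\xi\exp(2R^2)}{\alpha}}{\log\left(\frac{1}{2eR^2}\log\frac{\xi\exp(2R^2)}{\alpha}\right)}\right)$ (with a sufficiently large constant).
   Context: $K_X$ is the $n\times n$ matrix with $(K_X)_{i,j}=\exp(-\|x^{(i)}-x^{(j)}\|^2)$. For a positive integer $s$, $K^{\mathsf{HD}}_{X,s}$ is the $n\times n$ matrix with \[ (K^{\mathsf{HD}}_{X,s})_{i,j}=\sum_{a=0}^{s-1}\left\langle e^{-\|x^{(i)}\|^2}\sqrt{\tfrac{2^a}{a!}}(x^{(i)})^{\otimes a},\ e^{-\|x^{(j)}\|^2}\sqrt{\tfrac{2^a}{a!}}(x^{(j)})^{\otimes a}\right\rangle, \] where $x^{\otimes 0}=1$, $x^{\otimes a}=x\otimes x^{\otimes(a-1)}\in\mathbb{R}^{d^a}$ (Kronecker product) and $\langle\cdot,\cdot\rangle$ is the standard inner product. *)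

From HB Require Import structures.
From mathcomp Require Import all_boot all_order all_algebra.
From mathcomp Require Import all_classical all_reals all_analysis.
Set Implicit Arguments. Unset Strict Implicit. Unset Printing Implicit Defensive.
Import Order.TTheory GRing.Theory Num.Theory.
Local Open Scope ring_scope.

Section Defs.
Variable R : realType.

Definition sqnorm (d : nat) (x : 'rV[R]_d) : R := \sum_(k < d) (x 0 k) ^+ 2.

Definition enorm (d : nat) (x : 'rV[R]_d) : R := Num.sqrt (sqnorm x).

Definition Lambda (d : nat) (Rad : R) : set 'rV[R]_d :=
  [set x | enorm x <= Rad].

Definition KX (d n : nat) (X : 'I_n -> 'rV[R]_d) : 'M[R]_n :=
  \matrix_(i < n, j < n) expR (- sqnorm (X i - X j)).

(* The a-fold tensor power x^{(x)a} in R^{d^a}; coordinates are indexed by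
   multi-indices (i_1,...,i_a) : {ffun 'I_a -> 'I_d} (a reindexing of the
   Kronecker-product coordinates, which does not change inner products). *)
Definition tpow (d a : nat) (x : 'rV[R]_d) : {ffun 'I_a -> 'I_d} -> R :=
  fun idx => \prod_(k < a) x 0 (idx k).

Definition tinner (d a : nat) (u v : {ffun 'I_a -> 'I_d} -> R) : R :=
  \sum_(idx : {ffun 'I_a -> 'I_d}) u idx * v idx.

Definition feat (d a : nat) (x : 'rV[R]_d) : {ffun 'I_a -> 'I_d} -> R :=
  fun idx => expR (- sqnorm x) * Num.sqrt (2 ^+ a / (a`!)%:R) * @tpow d a x idx.

Definition KHD (d n : nat) (X : 'I_n -> 'rV[R]_d) (s : nat) : 'M[R]_n :=
  \matrix_(i < n, j < n)
     \sum_(a < s) tinner (@feat d a (X i)) (@feat d a (X j)).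

Definition qform (n : nat) (w : 'cV[R]_n) (M : 'M[R]_n) : R :=
  ((w^T *m M *m w) 0 0).

Definition l1 (n : nat) (w : 'cV[R]_n) : R := \sum_(i < n) `|w i 0|.

End Defs.

From HB Require Import structures.
From mathcomp Require Import all_boot all_order all_algebra.
From mathcomp Require Import all_classical all_reals all_analysis.
From mathcomp Require Import ring lra.
Import Order.TTheory GRing.Theory Num.Theory.
Local Open Scope ring_scope.

(* Expanding exp(-|x - y|^2) = exp(-|x|^2) exp(-|y|^2) exp(2<x,y>) shows that an
   entry of K_X - K^HD_{X,s} is exp(-|x|^2 - |y|^2) times the remainder of the
   exponential series of t = 2<x,y> after s terms, since the a-th summand of
   K^HD is exactly exp(-|x|^2 - |y|^2) t^a / a!.  With |t| <= 2R^2 and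
   s! >= (s/e)^s this remainder is at most exp(2R^2) (2eR^2/s)^s, and the
   quadratic form is at most (sum_i |w_i|)^2 times the largest entry.
   For the choice of s, put b = 2eR^2, u = L/b and r = s/b: the hypothesis
   r >= 2u / ln u forces r ln r >= u, i.e. (b/s)^s = exp(-s ln r) <= exp(-L). *)

Lemma leq_mul_fact m n : (m`! * n`! <= (m + n)`!)%N.
Proof.
have := bin_fact (leq_addr n m); rewrite addKn => <-.
by rewrite leq_pmull // bin_gt0 leq_addr.
Qed.

Section ExpSeries.
Variable R : realType.
Implicit Types t T : R.

Lemma expR_partial_sum_le t N : 0 <= t ->
  \sum_(0 <= a < N) t ^+ a / a`!%:R <= expR t.
Proof.
move=> t0; apply: (nondecreasing_cvgn_le _ (is_cvg_series_exp_coeff t)).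
by apply: (@nondecreasing_series _ _ predT) => n _ _; exact: exp_coeff_ge0.
Qed.

Lemma expR_tail_sum_le t s N :
  `|\sum_(s <= a < N) t ^+ a / a`!%:R| <= expR `|t| * (`|t| ^+ s / s`!%:R).
Proof.
have c0 : 0 <= `|t| ^+ s / s`!%:R by rewrite divr_ge0 // exprn_ge0.
apply: le_trans (ler_norm_sum _ _ _) _.
have [Ns|sN] := leqP N s; first by rewrite big_geq // mulr_ge0 ?expR_ge0.
rewrite -{1}(add0n s) big_addn (mulrC (expR _)).
apply: le_trans _ (ler_wpM2l c0 (expR_partial_sum_le _ (N - s) (normr_ge0 t))).
rewrite big_distrr /= !big_nat; apply: ler_sum => a _.
rewrite normrM normrX normfV normr_nat addnC exprD mulrACA -invfM.
rewrite ler_wpM2l ?mulr_ge0 ?exprn_ge0 // lef_pV2 ?posrE ?ltr0n ?muln_gt0 ?fact_gt0 //.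
by rewrite -natrM ler_nat leq_mul_fact.
Qed.

Lemma expR_taylor_remainder_le t s :
  `|expR t - \sum_(a < s) t ^+ a / a`!%:R| <= expR `|t| * (`|t| ^+ s / s`!%:R).
Proof.
rewrite -(big_mkord xpredT (fun a => t ^+ a / a`!%:R)).
set S := \sum_(0 <= a < s) _; set B := expR `|t| * _.
have near_S : \forall N \near \oo%classic, `|series (exp_coeff t) N - S| <= B.
  near=> N; have sN : (s <= N)%N by near: N; exists s.
  rewrite /series /= (@big_cat_nat _ _ _ s 0 N _ _ (leq0n s) sN) /= addrC addrK.
  exact: expR_tail_sum_le.
have cvg_exp := is_cvg_series_exp_coeff t.
have lo : S - B <= expR t.
  by apply: limr_ge => //; apply: filterS near_S => N /ler_normlP[]; lra.
have hi : expR t <= S + B.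
  by apply: limr_le => //; apply: filterS near_S => N /ler_normlP[]; lra.
by apply/ler_normlP; split; lra.
Unshelve. all: by end_near.
Qed.

Lemma natr_expn_div_fact_le s : (s%:R : R) ^+ s / s`!%:R <= expR 1 ^+ s.
Proof.
rewrite -expRM_natl mulr1.
apply: le_trans _ (expR_partial_sum_le _ s.+1 (ler0n _ s)).
rewrite big_nat_recr //= lerDr.
by apply: sumr_ge0 => a _; rewrite divr_ge0 ?exprn_ge0.
Qed.

Lemma expn_div_fact_le T s : 0 <= T -> (0 < s)%N ->
  T ^+ s / s`!%:R <= (expR 1 * T / s%:R) ^+ s.
Proof.
move=> T0 s0.
have -> : (expR 1 * T / s%:R) ^+ s = T ^+ s * (expR 1 ^+ s / s%:R ^+ s).
  by rewrite !exprMn exprVn; ring.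
rewrite ler_wpM2l ?exprn_ge0 // ler_pdivlMr ?exprn_gt0 ?ltr0n // mulrC.
exact: natr_expn_div_fact_le.
Qed.

Lemma expR_taylor_remainder_le_pow t T s : `|t| <= T -> (0 < s)%N ->
  `|expR t - \sum_(a < s) t ^+ a / a`!%:R| <= expR T * (expR 1 * T / s%:R) ^+ s.
Proof.
move=> tT s0; have T0 : 0 <= T := le_trans (normr_ge0 t) tT.
apply: le_trans (expR_taylor_remainder_le t s) _.
rewrite ler_pM ?expR_ge0 ?divr_ge0 ?exprn_ge0 ?ler_expR //.
apply: le_trans _ (expn_div_fact_le _ _ T0 s0).
by rewrite ler_wpM2r ?invr_ge0 // lerXn2r ?nnegrE.
Qed.

End ExpSeries.

Section KernelEntries.
Variables (R : realType) (d : nat).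

Definition dot (x y : 'rV[R]_d) : R := \sum_(k < d) x 0 k * y 0 k.

Lemma sqnorm_ge0 (x : 'rV[R]_d) : 0 <= sqnorm x.
Proof. by apply: sumr_ge0 => k _; rewrite sqr_ge0. Qed.

Lemma sqnorm_le_Lambda (x : 'rV[R]_d) (Rad : R) :
  Lambda Rad x -> sqnorm x <= Rad ^+ 2.
Proof.
rewrite /Lambda /enorm /= => x_le; rewrite -(sqr_sqrtr (sqnorm_ge0 x)).
by rewrite lerXn2r ?nnegrE // (le_trans _ x_le).
Qed.

Lemma sqnormB (x y : 'rV[R]_d) : sqnorm (x - y) = sqnorm x + sqnorm y - 2 * dot x y.
Proof.
rewrite /sqnorm /dot mulr_sumr -big_split -sumrB /=; apply: eq_bigr => k _.
by rewrite !mxE; ring.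
Qed.

Lemma norm_dot2_le (x y : 'rV[R]_d) : `|2 * dot x y| <= sqnorm x + sqnorm y.
Proof.
rewrite /dot /sqnorm mulr_sumr -big_split /=.
apply: le_trans (ler_norm_sum _ _ _) _; apply: ler_sum => k _.
have := sqr_ge0 (x 0 k + y 0 k); have := sqr_ge0 (x 0 k - y 0 k).
by move=> *; apply/ler_normlP; split; nra.
Qed.

Lemma tinner_tpow a (x y : 'rV[R]_d) :
  tinner (@tpow R d a x) (@tpow R d a y) = dot x y ^+ a.
Proof.
rewrite /tinner /tpow /dot; under eq_bigr => idx _ do rewrite -big_split /=.
by rewrite -(bigA_distr_bigA (fun (_ : 'I_a) j => x 0 j * y 0 j)) prodr_const card_ord.
Qed.

Lemma tinner_feat a (x y : 'rV[R]_d) :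
  tinner (@feat R d a x) (@feat R d a y) =
  expR (- sqnorm x) * expR (- sqnorm y) * ((2 * dot x y) ^+ a / a`!%:R).
Proof.
have -> : tinner (@feat R d a x) (@feat R d a y) =
    expR (- sqnorm x) * expR (- sqnorm y) * Num.sqrt (2 ^+ a / a`!%:R) ^+ 2 *
    tinner (@tpow R d a x) (@tpow R d a y).
  by rewrite /tinner /feat mulr_sumr; apply: eq_bigr => idx _; ring.
by rewrite tinner_tpow sqr_sqrtr ?divr_ge0 ?exprn_ge0 // exprMn; ring.
Qed.

Lemma KX_sub_KHD_entry n (X : 'I_n -> 'rV[R]_d) s i j :
  (KX X - KHD X s) i j = expR (- sqnorm (X i)) * expR (- sqnorm (X j)) *
    (expR (2 * dot (X i) (X j)) - \sum_(a < s) (2 * dot (X i) (X j)) ^+ a / a`!%:R).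
Proof.
rewrite !mxE sqnormB; under eq_bigr => a _ do rewrite tinner_feat.
rewrite -mulr_sumr opprB addrC opprD addrA !expRD; ring.
Qed.

Lemma KX_sub_KHD_entry_le n (X : 'I_n -> 'rV[R]_d) (rho : R) s i j :
  sqnorm (X i) <= rho -> sqnorm (X j) <= rho -> (0 < s)%N ->
  `|(KX X - KHD X s) i j| <= expR (2 * rho) * (2 * expR 1 * rho / s%:R) ^+ s.
Proof.
move=> Xi_le Xj_le s0; rewrite KX_sub_KHD_entry normrM -[leRHS]mul1r.
have gauss_le1 : `|expR (- sqnorm (X i)) * expR (- sqnorm (X j))| <= 1.
  have := sqnorm_ge0 (X i); have := sqnorm_ge0 (X j).
  by rewrite ger0_norm ?mulr_ge0 ?expR_ge0 // -expRD expR_le1; lra.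
rewrite ler_pM // (_ : 2 * expR 1 * rho = expR 1 * (2 * rho)); last by ring.
apply: expR_taylor_remainder_le_pow _ _ _ _ s0.
by apply: le_trans (norm_dot2_le _ _) _; lra.
Qed.

Lemma qform_le_l1 n (w : 'cV[R]_n) (M : 'M[R]_n) (B : R) :
  (forall i j, `|M i j| <= B) -> qform w M <= l1 w ^+ 2 * B.
Proof.
move=> M_le; rewrite /qform /l1 mxE; under eq_bigr => j _ do rewrite mxE.
apply: le_trans (ler_norm _) _; apply: le_trans (ler_norm_sum _ _ _) _.
rewrite expr2 mulr_suml mulr_suml; apply: ler_sum => j _.
rewrite normrM mulrC -mulrA ler_wpM2l // mulr_suml.
apply: le_trans (ler_norm_sum _ _ _) _; apply: ler_sum => i _.
by rewrite !mxE normrM ler_wpM2l.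
Qed.

End KernelEntries.

Section TruncationOrder.
Variable R : realType.

Lemma ln_le_half (y : R) : 0 < y -> ln y <= y / 2.
Proof.
move=> y0.
have ln2_le1 : ln (2 : R) <= 1 by rewrite (_ : 2 = 1 + 1) // le_ln1Dx //; lra.
rewrite -[y in ln y](@mulfVK _ 2) // lnM ?posrE //; last lra.
have : ln (y / 2) <= y / 2 - 1.
  by have := @le_ln1Dx R (y / 2 - 1); rewrite addrCA subrr addr0; apply; lra.
lra.
Qed.

Lemma le_mul_ln (u r : R) : 1 < u -> 2 * u / ln u <= r -> u <= r * ln r.
Proof.
move=> u1 r_ge; have lnu0 : 0 < ln u := ln_gt0 u1.
have q0 : 0 < 2 * u / ln u by rewrite !divr_gt0 //; lra.
have r0 : 0 < r := lt_le_trans q0 r_ge.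
have ln_r : ln u / 2 <= ln r.
  apply: le_trans (_ : ln (2 * u / ln u) <= ln r); last by rewrite ler_ln ?posrE.
  rewrite !lnM ?posrE ?invr_gt0 ?mulr_gt0 //; try lra.
  rewrite lnV ?posrE //; have := ln_le_half _ lnu0; have := @ln_ge0 R 2; lra.
have half0 : 0 < ln u / 2 by lra.
rewrite -[u in u <= _](@mulfVK _ (ln u / 2)) ?gt_eqF //.
apply: ler_pM (ltW half0) _ ln_r; first by rewrite divr_ge0 // ltW // (lt_trans ltr01).
by apply: le_trans r_ge; rewrite invf_div mulrA [u * 2]mulrC.
Qed.

Lemma pow_div_le_expRN (b L : R) (s : nat) : 0 < b -> 1 < L / b ->
  2 * (L / ln (L / b)) <= s%:R -> (b / s%:R) ^+ s <= expR (- L).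
Proof.
move=> b0 u1 s_ge.
have L0 : 0 < L by rewrite -(divfK (lt0r_neq0 b0) L) mulr_gt0 //; lra.
have s0 : 0 < (s%:R : R).
  by apply: lt_le_trans s_ge; rewrite mulr_gt0 ?divr_gt0 ?ln_gt0.
have r_ge : 2 * (L / b) / ln (L / b) <= s%:R / b.
  by rewrite mulrA mulrAC -[2 * L / _]mulrA ler_pM2r ?invr_gt0.
have -> : b / s%:R = expR (- ln (s%:R / b)).
  by rewrite expRN lnK ?posrE ?divr_gt0 // invf_div.
rewrite -expRM_natl ler_expR mulrN lerN2.
have := ler_wpM2l (ltW b0) (le_mul_ln _ _ u1 r_ge).
by rewrite [in X in _ <= X -> _]mulrA !(mulrC b) !divfK ?gt_eqF.
Qed.

Lemma truncation_error_le (c xi alpha T b : R) :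
  0 < b -> 0 <= c -> c <= xi -> 0 < alpha ->
  let L := ln (xi * expR T / alpha) in
  1 < L / b -> forall s : nat, 2 * (L / ln (L / b)) <= s%:R ->
  c * expR T * (b / s%:R) ^+ s <= alpha.
Proof.
move=> b0 c0 c_le alpha0 L u1 s s_ge.
have L0 : 0 < L by rewrite -(divfK (lt0r_neq0 b0) L) mulr_gt0 //; lra.
have arg0 : 0 < xi * expR T / alpha.
  rewrite ltNge; apply: contraTN L0 => arg_le0; rewrite -leNgt.
  exact: ln_le0 (le_trans arg_le0 ler01).
have xiT0 : 0 < xi * expR T.
  by rewrite -(divfK (lt0r_neq0 alpha0) (xi * expR T)) mulr_gt0.
have -> : alpha = xi * expR T * expR (- L).
  by rewrite /L expRN lnK ?posrE // invf_div mulrC divfK ?lt0r_neq0.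
apply: ler_pM.
- exact: mulr_ge0 c0 (expR_ge0 T).
- exact: exprn_ge0 (divr_ge0 (ltW b0) (ler0n _ s)).
- by rewrite ler_pM2r ?expR_gt0.
- exact: pow_div_le_expRN.
Qed.

End TruncationOrder.

Theorem lemma2p7 (R : realType) :
  exists C : R, 0 < C /\
  forall (Rad : R) (d n : nat) (X : 'I_n -> 'rV[R]_d) (w : 'cV[R]_n) (xi alpha : R),
    0 < Rad -> (0 < d)%N ->
    (forall i, @Lambda R d Rad (X i)) ->
    (l1 w) ^+ 2 <= xi -> 0 < alpha ->
    (forall s : nat, (0 < s)%N ->
       qform w (KX X - KHD X s)
       <= (l1 w) ^+ 2 * expR (2 * Rad ^+ 2) * (2 * expR 1 * Rad ^+ 2 / s%:R) ^+ s)
    /\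
    (let L := ln (xi * expR (2 * Rad ^+ 2) / alpha) in
     1 < L / (2 * expR 1 * Rad ^+ 2) ->
     forall s : nat, C * (L / ln (L / (2 * expR 1 * Rad ^+ 2))) <= s%:R ->
       (l1 w) ^+ 2 * expR (2 * Rad ^+ 2) * (2 * expR 1 * Rad ^+ 2 / s%:R) ^+ s
       <= alpha).
Proof.
exists 2; split; first lra.
move=> Rad d n X w xi alpha Rad0 _ X_in l1_le alpha0; split.
- move=> s s0; rewrite -mulrA; apply: qform_le_l1 => i j.
  by apply: KX_sub_KHD_entry_le => //; apply: sqnorm_le_Lambda.
- apply: truncation_error_le => //; first by rewrite !mulr_gt0 ?expR_gt0 ?exprn_gt0.
  exact: sqr_ge0.
Qed.
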